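(* For every integer $n\geqslant1$, \[ \sum_{k=0}^{n-1}\frac{(2k+1)^{2}}{(n-k)^{2}(n+k+1)^{2}} =\frac{\pi^{2}}{6}-\frac{2\gamma}{2n+1}-\frac{2}{2n+1}\psi(2n+1)-\psi_{1}(2n+1). \]
   Context: $\psi=\Gamma'/\Gamma$ is the digamma function, $\psi_1=\psi'$ the trigamma function, and $\gamma$ the Euler–Mascheroni constant. *)

From Stdlib Require Import Reals.
From Coquelicot Require Import Coquelicot.
Open Scope R_scope.

Definition Gamma (x : R) : R :=
  RInt_gen (fun t => Rpower t (x - 1) * exp (- t))
           (at_right 0) (Rbar_locally p_infty).

Definition digamma (x : R) : R := Derive Gamma x / Gamma x.

Definition trigamma (x : R) : R := Derive digamma x.

Definition harmonic (m : nat) : R := sum_f_R0 (fun k => / INR (S k)) (pred m).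
Definition euler_gamma : R :=
  real (Lim_seq (fun m => harmonic m - ln (INR m))).

From Stdlib Require Import Reals Lra Lia.
From Coquelicot Require Import Coquelicot.
Open Scope R_scope.

(* Put a = n - k and b = n + k + 1, so that a + b = 2n + 1 and b - a = 2k + 1.  The summand
   is 1/a^2 + 1/b^2 - (2/(2n+1)) (1/a + 1/b), hence the sum is S_2n - 2 H_2n / (2n+1) with
   S_m = sum_(j<=m) 1/j^2 and H_m = sum_(j<=m) 1/j.  It remains to show
   psi(m+1) = H_m - gamma and psi_1(m+1) = pi^2/6 - S_m.

   Both come from Gamma(x+1) = x Gamma(x) and the log-convexity of Gamma (Cauchy-Schwarz
   on Euler's integral).  Log-convexity squeezes psi(r) between ln r - 1/r and ln r, which
   gives gamma = 1 - psi(2).  It also makes psi increasing, so that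
   psi(c+h) - psi(c) = h sum_(k<N) 1/((c+k)(c+h+k)) + O(1/N) uniformly in h; letting N go
   to infinity, psi'(m+1) is the tail sum_(j>m) 1/j^2 of the Basel series.  Matsuoka's
   integrals int_0^(pi/2) x^2 cos^(2k) x dx give pi^2/6 for that series together with an
   explicit O(1/k) bound on its tails. *)

Lemma ex_derive_continuous_R (f : R -> R) (x : R) : ex_derive f x -> continuous f x.
Proof. apply (@ex_derive_continuous R_AbsRing R_NormedModule). Qed.

Lemma ex_RInt_of_ex_derive (f : R -> R) (a b : R) : (forall x, ex_derive f x) -> ex_RInt f a b.
Proof.
  intros Hf. apply (@ex_RInt_continuous R_CompleteNormedModule). intros x _.
  apply ex_derive_continuous_R, Hf.
Qed.

Lemma INR_double (n : nat) : INR (2 * n) = 2 * INR n.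
Proof. now rewrite mult_INR. Qed.

Lemma exp_le_increasing (x y : R) : x <= y -> exp x <= exp y.
Proof. intros [H | ->]; [left; apply exp_increasing |]; lra. Qed.

Lemma exp_ge_1 (y : R) : 0 <= y -> 1 <= exp y.
Proof. intros Hy. rewrite <- exp_0. now apply exp_le_increasing. Qed.

Lemma ln_le_sub_1 (y : R) : 0 < y -> ln y <= y - 1.
Proof. intros Hy. pose proof (exp_ineq1_le (ln y)). rewrite exp_ln in *; lra. Qed.

Lemma exp_abs_le (y : R) : exp (Rabs y) <= exp y + exp (- y).
Proof.
  pose proof (exp_pos y). pose proof (exp_pos (- y)).
  unfold Rabs. destruct (Rcase_abs y); lra.
Qed.

Lemma abs_le_exp (d y : R) : 0 < d -> Rabs y <= (exp (d * y) + exp (- (d * y))) / d.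
Proof.
  intros Hd. pose proof (exp_ineq1_le (Rabs (d * y))). pose proof (exp_abs_le (d * y)).
  rewrite Rabs_mult, (Rabs_right d) in * by lra.
  apply (Rmult_le_reg_l d); auto. unfold Rdiv. rewrite <- Rmult_assoc, Rinv_r_simpl_m; lra.
Qed.

Lemma exp_taylor_1 (u : R) : Rabs (exp u - 1 - u) <= u ^ 2 * exp (Rabs u).
Proof.
  pose proof (exp_ineq1_le u) as H1. pose proof (exp_ineq1_le (- u)) as H2.
  pose proof (exp_pos u). rewrite exp_Ropp in H2.
  assert (H3 : exp u - 1 <= u * exp u).
  { apply (Rmult_le_compat_r (exp u)) in H2; [| lra]. rewrite Rinv_l in H2; nra. }
  rewrite Rabs_right by lra.
  destruct (Rle_or_lt 0 u).
  - rewrite Rabs_right by lra. nra.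
  - rewrite Rabs_left by lra.
    assert (1 <= exp (- u)) by (apply exp_ge_1; lra). nra.
Qed.

Lemma Rpower_le_exp (b c : R) : 0 < b -> 0 < c ->
  exists K, 0 < K /\ forall t, 0 < t -> Rpower t b <= K * exp (c * t).
Proof.
  intros Hb Hc. set (s := b / c). assert (Hs : 0 < s) by (apply Rdiv_lt_0_compat; auto).
  exists (exp (b * ln s - b)). split; [apply exp_pos |].
  intros t Ht. unfold Rpower. rewrite <- exp_plus. apply exp_le_increasing.
  assert (E : ln t = ln s + ln (t / s)).
  { rewrite <- ln_mult by (auto; apply Rdiv_lt_0_compat; auto). f_equal. field. lra. }
  pose proof (ln_le_sub_1 (t / s) ltac:(apply Rdiv_lt_0_compat; auto)).
  rewrite E. replace (c * t) with (b * (t / s)) by (unfold s; field; lra).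
  assert (b * ln (t / s) <= b * (t / s - 1)) by (apply Rmult_le_compat_l; lra).
  lra.
Qed.

Lemma Rpower_le_base (a x : R) : 0 < a < 1 -> 1 <= x -> Rpower a x <= a.
Proof.
  intros Ha Hx. unfold Rpower. rewrite <- (exp_ln a) at 2 by lra. apply exp_le_increasing.
  assert (ln a < 0) by (rewrite <- ln_1; apply ln_increasing; lra). nra.
Qed.

Lemma ball_R (x y e : R) : ball x e y <-> Rabs (y - x) < e.
Proof. reflexivity. Qed.

Lemma ball_R_between (x e y : R) : ball x e y -> x - e < y < x + e.
Proof. intros H. change (Rabs (y - x) < e) in H. apply Rabs_lt_between in H. lra. Qed.

Lemma locally_gt (a t : R) : a < t -> locally t (fun y => a < y).
Proof.
  intros Ht. assert (Hp : 0 < t - a) by lra.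
  exists (mkposreal _ Hp). intros y Hy. apply ball_R_between in Hy. simpl in Hy. lra.
Qed.

Lemma filterlim_at_right_continuous (f : R -> R) (x : R) :
  continuous f x -> filterlim f (at_right x) (locally (f x)).
Proof. intros H. eapply filterlim_filter_le_1; [apply filter_le_within | exact H]. Qed.

Lemma is_derive_eq (f : R -> R) (x l l' : R) : is_derive f x l -> l = l' -> is_derive f x l'.
Proof. now intros H <-. Qed.

Lemma is_derive_of_quadratic_bound (f : R -> R) (x l delta K : R) : 0 < delta ->
  (forall h, Rabs h <= delta -> Rabs (f (x + h) - f x - h * l) <= K * h ^ 2) ->
  is_derive f x l.
Proof.
  intros Hdelta Hf. apply is_derive_Reals. intros eps Heps.
  set (K' := Rabs K + 1). assert (HK : 0 < K') by (unfold K'; pose proof (Rabs_pos K); lra).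
  assert (Hd : 0 < Rmin delta (eps / K')) by (apply Rmin_glb_lt; [| apply Rdiv_lt_0_compat]; lra).
  exists (mkposreal _ Hd). intros h Hh0 Hh. simpl in Hh.
  pose proof (Rmin_l delta (eps / K')). pose proof (Rmin_r delta (eps / K')).
  assert (Ha : 0 < Rabs h) by (apply Rabs_pos_lt; auto).
  specialize (Hf h ltac:(lra)).
  replace ((f (x + h) - f x) / h - l) with ((f (x + h) - f x - h * l) / h) by (field; auto).
  unfold Rdiv. rewrite Rabs_mult, Rabs_inv.
  apply Rle_lt_trans with (K' * Rabs h).
  - apply (Rmult_le_reg_r (Rabs h)); auto.
    rewrite Rmult_assoc, Rinv_l, Rmult_1_r by lra.
    eapply Rle_trans; [apply Hf |]. rewrite <- (pow2_abs h).
    replace (K' * Rabs h * Rabs h) with (K' * Rabs h ^ 2) by ring.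
    apply Rmult_le_compat_r; [apply pow2_ge_0 | unfold K'; pose proof (Rle_abs K); lra].
  - assert (Hh' : Rabs h < eps / K') by lra.
    apply (Rmult_lt_compat_l K') in Hh'; auto.
    now replace (K' * (eps / K')) with eps in Hh' by (field; lra).
Qed.

Lemma is_derive_le_difference_quotients (g : R -> R) (x d s delta : R) : delta <> 0 ->
  is_derive g x d ->
  (forall N : nat, (g (x + delta / INR (S N)) - g x) / (delta / INR (S N)) <= s) -> d <= s.
Proof.
  intros Hdelta Hg Hq. apply is_derive_Reals in Hg.
  destruct (Rle_or_lt d s) as [| Hlt]; auto. exfalso.
  destruct (Hg (d - s) ltac:(lra)) as [e He].
  assert (Ha : 0 < Rabs delta) by (apply Rabs_pos_lt; auto).
  destruct (archimed_cor1 (e / Rabs delta)) as [N [HN HN0]];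
    [apply Rdiv_lt_0_compat; [apply cond_pos | auto] |].
  assert (HNpos : 0 < INR N) by (apply lt_0_INR; lia).
  destruct N as [| N]; [lia |].
  assert (Hh : Rabs (delta / INR (S N)) < e).
  { unfold Rdiv. rewrite Rabs_mult, Rabs_inv, (Rabs_right (INR (S N))) by lra.
    apply (Rmult_lt_reg_r (/ Rabs delta)); [apply Rinv_0_lt_compat; auto |].
    replace (Rabs delta * / INR (S N) * / Rabs delta) with (/ INR (S N)) by (field; lra).
    exact HN. }
  assert (Hne : delta / INR (S N) <> 0)
    by (unfold Rdiv; apply Rmult_integral_contrapositive; split; [| apply Rinv_neq_0_compat]; lra).
  specialize (He _ Hne Hh). specialize (Hq N).
  apply Rabs_lt_between in He. lra.
Qed.

Lemma le_of_le_add_inv_S (a b C : R) : (forall N : nat, a <= b + C / (INR N + 1)) -> a <= b.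
Proof.
  intros H. destruct (Rle_or_lt a b) as [| Hab]; auto. exfalso.
  destruct (Rle_or_lt C 0) as [HC | HC].
  - specialize (H 0%nat). simpl in H. unfold Rdiv in H. rewrite Rplus_0_l, Rinv_1 in H. lra.
  - destruct (archimed_cor1 ((a - b) / C)) as [N [HN HN0]]; [apply Rdiv_lt_0_compat; lra |].
    assert (HNpos : 0 < INR N) by (apply lt_0_INR; lia).
    specialize (H N).
    assert (C / (INR N + 1) < a - b).
    { apply Rlt_trans with (C / INR N).
      - apply Rmult_lt_compat_l; auto. apply Rinv_lt_contravar; nra.
      - apply (Rmult_lt_reg_r (/ C)); [apply Rinv_0_lt_compat; auto |].
        replace (C / INR N * / C) with (/ INR N) by (field; lra).
        replace ((a - b) * / C) with ((a - b) / C) by reflexivity. exact HN. }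
    lra.
Qed.

Lemma RInt_antiderivative (F f : R -> R) (a b : R) :
  (forall x, is_derive F x (f x)) -> (forall x, continuous f x) -> RInt f a b = F b - F a.
Proof.
  intros HF Hf. apply is_RInt_unique, (is_RInt_derive F f a b); auto.
Qed.

Lemma RInt_lincomb (f g : R -> R) (a b al be : R) : ex_RInt f a b -> ex_RInt g a b ->
  RInt (fun x => al * f x + be * g x) a b = al * RInt f a b + be * RInt g a b.
Proof.
  intros Hf Hg. apply is_RInt_unique.
  exact (is_RInt_plus _ _ a b _ _ (is_RInt_scal _ a b al _ (RInt_correct _ _ _ Hf))
           (is_RInt_scal _ a b be _ (RInt_correct _ _ _ Hg))).
Qed.

(** * Finite sums *)

Fixpoint sum_lt (f : nat -> R) (N : nat) : R :=
  match N with O => 0 | S n => sum_lt f n + f n end.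

Lemma sum_lt_ext (f g : nat -> R) (N : nat) : (forall k, (k < N)%nat -> f k = g k) ->
  sum_lt f N = sum_lt g N.
Proof. induction N; intros H; simpl; auto. rewrite IHN, H; auto. Qed.

Lemma sum_lt_plus (f g : nat -> R) (N : nat) :
  sum_lt (fun k => f k + g k) N = sum_lt f N + sum_lt g N.
Proof. induction N; simpl; [ring | rewrite IHN; ring]. Qed.

Lemma sum_lt_minus (f g : nat -> R) (N : nat) :
  sum_lt (fun k => f k - g k) N = sum_lt f N - sum_lt g N.
Proof. induction N; simpl; [ring | rewrite IHN; ring]. Qed.

Lemma sum_lt_scal (f : nat -> R) (a : R) (N : nat) :
  sum_lt (fun k => a * f k) N = a * sum_lt f N.
Proof. induction N; simpl; [ring | rewrite IHN; ring]. Qed.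

Lemma sum_lt_le (f g : nat -> R) (N : nat) : (forall k, (k < N)%nat -> f k <= g k) ->
  sum_lt f N <= sum_lt g N.
Proof. induction N; intros H; simpl; [lra |]. apply Rplus_le_compat; auto. Qed.

Lemma sum_lt_abs (f : nat -> R) (N : nat) : Rabs (sum_lt f N) <= sum_lt (fun k => Rabs (f k)) N.
Proof.
  induction N; simpl; [rewrite Rabs_R0; lra |].
  eapply Rle_trans; [apply Rabs_triang | lra].
Qed.

Lemma sum_lt_shift (f : nat -> R) (m N : nat) :
  sum_lt (fun k => f (m + k)%nat) N = sum_lt f (m + N) - sum_lt f m.
Proof.
  induction N; simpl; [rewrite Nat.add_0_r; ring |].
  rewrite Nat.add_succ_r. simpl. rewrite IHN. ring.
Qed.

Lemma sum_lt_rev (f : nat -> R) (N : nat) : sum_lt (fun k => f (N - 1 - k)%nat) N = sum_lt f N.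
Proof.
  induction N; [reflexivity |].
  assert (Hfirst : forall g M, sum_lt g (S M) = g O + sum_lt (fun k => g (S k)) M).
  { intros g M. induction M; simpl in *; [ring |]. rewrite IHM. ring. }
  rewrite Hfirst. replace (S N - 1 - 0)%nat with N by lia.
  rewrite (sum_lt_ext _ (fun k => f (N - 1 - k)%nat)) by (intros; f_equal; lia).
  rewrite IHN. simpl. ring.
Qed.

Lemma sum_lt_fold (f : nat -> R) (n : nat) :
  sum_lt (fun k => f (n - 1 - k)%nat + f (n + k)%nat) n = sum_lt f (2 * n).
Proof.
  rewrite sum_lt_plus, sum_lt_rev, sum_lt_shift. replace (n + n)%nat with (2 * n)%nat by lia. ring.
Qed.

Lemma sum_lt_sum_f_R0 (f : nat -> R) (N : nat) : sum_lt f (S N) = sum_f_R0 f N.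
Proof. induction N; simpl in *; [ring | rewrite <- IHN; ring]. Qed.

(** * Improper integrals over (0, +oo) *)

Notation is_RInt_0_infty f l := (is_RInt_gen f (at_right 0) (Rbar_locally p_infty) l).

Notation at_0_infty := (filter_prod (at_right 0) (Rbar_locally p_infty)).

Definition continuous_pos (f : R -> R) := forall t, 0 < t -> continuous f t.

Lemma at_right_0_lt (c : R) : 0 < c -> at_right 0 (fun a => 0 < a < c).
Proof.
  intros Hc. exists (mkposreal c Hc). intros y Hy Hp.
  apply ball_R_between in Hy. simpl in Hy. lra.
Qed.

Lemma at_0_infty_inside (a b : R) : 0 < a ->
  at_0_infty (fun uv => 0 < fst uv < a /\ b < snd uv).
Proof.
  intros Ha. apply (Filter_prod _ _ _ (fun u => 0 < u < a) (fun v => b < v)).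
  - now apply at_right_0_lt.
  - now exists b.
  - now intros.
Qed.

Lemma at_0_infty_pos (P : R -> Prop) : (forall t, 0 < t -> P t) ->
  at_0_infty (fun uv => forall t, Rmin (fst uv) (snd uv) <= t <= Rmax (fst uv) (snd uv) -> P t).
Proof.
  intros HP. refine (filter_imp _ _ _ (at_0_infty_inside 1 2 Rlt_0_1)).
  intros [u v] [Hu Hv] t Ht. simpl in *. apply HP.
  apply Rlt_le_trans with (Rmin u v); [apply Rmin_glb_lt |]; lra.
Qed.

Lemma ex_RInt_pos (f : R -> R) (a b : R) : continuous_pos f -> 0 < a -> 0 < b -> ex_RInt f a b.
Proof.
  intros Hf Ha Hb. apply (@ex_RInt_continuous R_CompleteNormedModule). intros z Hz. apply Hf.
  apply Rlt_le_trans with (Rmin a b); [apply Rmin_glb_lt |]; lra.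
Qed.

Lemma RInt_correct_pos (f : R -> R) (a b : R) : continuous_pos f -> 0 < a -> 0 < b ->
  is_RInt f a b (RInt f a b).
Proof.
  intros Hf Ha Hb. exact (@RInt_correct R_CompleteNormedModule f a b (ex_RInt_pos f a b Hf Ha Hb)).
Qed.

Lemma RInt_Chasles_pos (f : R -> R) (a b c : R) : continuous_pos f -> 0 < a -> 0 < b -> 0 < c ->
  RInt f a b + RInt f b c = RInt f a c.
Proof. intros Hf Ha Hb Hc. apply (RInt_Chasles f a b c); apply ex_RInt_pos; auto. Qed.

Lemma is_RInt_0_infty_ext (f g : R -> R) (l : R) : (forall t, 0 < t -> f t = g t) ->
  is_RInt_0_infty f l -> is_RInt_0_infty g l.
Proof.
  intros Hfg. apply (is_RInt_gen_ext f).
  refine (filter_imp _ _ _ (at_0_infty_pos _ Hfg)). intros uv H t Ht. apply H. lra.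
Qed.

Lemma is_RInt_0_infty_unique (f : R -> R) (l : R) : is_RInt_0_infty f l ->
  RInt_gen f (at_right 0) (Rbar_locally p_infty) = l.
Proof. intros H. exact (@is_RInt_gen_unique R_CompleteNormedModule _ _ _ _ f l H). Qed.

Lemma is_RInt_0_infty_lin (f g : R -> R) (a b lf lg : R) :
  is_RInt_0_infty f lf -> is_RInt_0_infty g lg ->
  is_RInt_0_infty (fun t => a * f t + b * g t) (a * lf + b * lg).
Proof.
  intros Hf Hg.
  exact (is_RInt_gen_plus _ _ _ _ (is_RInt_gen_scal _ a _ Hf) (is_RInt_gen_scal _ b _ Hg)).
Qed.

Lemma is_RInt_0_infty_scal (f : R -> R) (a l : R) :
  is_RInt_0_infty f l -> is_RInt_0_infty (fun t => a * f t) (a * l).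
Proof. intros Hf. exact (is_RInt_gen_scal _ a _ Hf). Qed.

Lemma is_RInt_0_infty_abs_le (f g : R -> R) (lf lg : R) :
  (forall t, 0 < t -> Rabs (f t) <= g t) ->
  is_RInt_0_infty f lf -> is_RInt_0_infty g lg -> Rabs lf <= lg.
Proof.
  intros Hfg Hf Hg.
  apply (@RInt_gen_norm R_CompleteNormedModule (at_right 0) (Rbar_locally p_infty) _ _
           f g lf lg); auto;
    refine (filter_imp _ _ _ (at_0_infty_inside 1 2 Rlt_0_1));
    intros [u v] [Hu Hv]; simpl in *; [lra |].
  intros t Ht. apply Hfg. lra.
Qed.

Lemma is_RInt_0_infty_ge_0 (f : R -> R) (l : R) :
  (forall t, 0 < t -> 0 <= f t) -> is_RInt_0_infty f l -> 0 <= l.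
Proof.
  intros Hf Hl.
  assert (H : Rabs l <= l).
  { apply (is_RInt_0_infty_abs_le f f l l); auto.
    intros t Ht. rewrite Rabs_right; [lra | now apply Rle_ge, Hf]. }
  pose proof (Rabs_pos l). lra.
Qed.

Lemma filterlim_RInt_0_infty (f : R -> R) (l : R) :
  is_RInt_0_infty f l -> filterlim (fun uv => RInt f (fst uv) (snd uv)) at_0_infty (locally l).
Proof.
  intros Hl. apply filterlim_locally. intros eps.
  pose proof (proj1 (filterlimi_locally _ l) Hl eps) as Heps.
  refine (filter_imp _ _ _ (filter_and _ _ Heps (at_0_infty_inside 1 2 Rlt_0_1))).
  intros [u v] [[z [Hz Hb]] [Hu Hv]]. simpl in *.
  now rewrite (is_RInt_unique _ _ _ _ Hz).
Qed.

Lemma RInt_le_is_RInt_0_infty (f : R -> R) (a b l : R) : 0 < a <= b -> continuous_pos f ->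
  (forall t, 0 < t -> 0 <= f t) -> is_RInt_0_infty f l -> RInt f a b <= l.
Proof.
  intros Hab Hc Hf Hl.
  apply (filterlim_le (F := at_0_infty) (fun _ => RInt f a b)
           (fun uv => RInt f (fst uv) (snd uv)) (RInt f a b) l).
  - refine (filter_imp _ _ _ (at_0_infty_inside a b (proj1 Hab))).
    intros [u v] [Hu Hv]. simpl in *.
    pose proof (RInt_Chasles_pos f u a v Hc ltac:(lra) ltac:(lra) ltac:(lra)).
    pose proof (RInt_Chasles_pos f a b v Hc ltac:(lra) ltac:(lra) ltac:(lra)).
    assert (0 <= RInt f u a)
      by (apply RInt_ge_0; [lra | apply ex_RInt_pos; auto; lra | intros; apply Hf; lra]).
    assert (0 <= RInt f b v)
      by (apply RInt_ge_0; [lra | apply ex_RInt_pos; auto; lra | intros; apply Hf; lra]).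
    lra.
  - apply filterlim_const.
  - now apply filterlim_RInt_0_infty.
Qed.

Lemma abs_RInt_le_dominated (f g : R -> R) (a b : R) :
  continuous_pos f -> continuous_pos g -> (forall t, 0 < t -> Rabs (f t) <= g t) ->
  0 < a -> 0 < b -> Rabs (RInt f a b) <= Rabs (RInt g a b).
Proof.
  intros Hf Hg Hfg.
  assert (Hle : forall p q, 0 < p -> p <= q -> Rabs (RInt f p q) <= Rabs (RInt g p q)).
  { intros p q Hp Hpq.
    apply Rle_trans with (RInt g p q); [| apply Rle_abs].
    apply Rle_trans with (RInt (fun t => Rabs (f t)) p q).
    - apply abs_RInt_le; [lra | apply ex_RInt_pos; auto; lra].
    - apply RInt_le; [lra | | apply ex_RInt_pos; auto; lra | intros; apply Hfg; lra].
      apply (@ex_RInt_continuous R_CompleteNormedModule). intros t Ht.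
      apply (continuous_comp f Rabs); [apply Hf | apply continuous_Rabs].
      apply Rlt_le_trans with (Rmin p q); [apply Rmin_glb_lt |]; lra. }
  intros Ha Hb. destruct (Rle_or_lt a b); [now apply Hle |].
  rewrite <- (opp_RInt_swap f), <- (opp_RInt_swap g) by (apply ex_RInt_pos; auto).
  unfold opp; simpl. rewrite !Rabs_Ropp. apply Hle; lra.
Qed.

Lemma RInt_increment_le_dominated (f g : R -> R) (a b a' b' : R) :
  continuous_pos f -> continuous_pos g -> (forall t, 0 < t -> Rabs (f t) <= g t) ->
  0 < a -> 0 < b -> 0 < a' -> 0 < b' ->
  Rabs (RInt f a' b' - RInt f a b)
  <= Rabs (RInt g a' b - RInt g a b) + Rabs (RInt g a' b' - RInt g a' b).
Proof.
  intros Hf Hg Hfg Ha Hb Ha' Hb'.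
  pose proof (RInt_Chasles_pos f a' a b' Hf Ha' Ha Hb').
  pose proof (RInt_Chasles_pos f a b b' Hf Ha Hb Hb').
  pose proof (RInt_Chasles_pos g a' a b Hg Ha' Ha Hb).
  pose proof (RInt_Chasles_pos g a' b b' Hg Ha' Hb Hb').
  replace (RInt f a' b' - RInt f a b) with (RInt f a' a + RInt f b b') by lra.
  replace (RInt g a' b - RInt g a b) with (RInt g a' a) by lra.
  replace (RInt g a' b' - RInt g a' b) with (RInt g b b') by lra.
  eapply Rle_trans; [apply Rabs_triang |].
  apply Rplus_le_compat; apply abs_RInt_le_dominated; auto.
Qed.

(* Cauchy criterion: by the previous lemma, the oscillation of the partial integrals
   of [f] is controlled by that of [g], which converge. *)
Lemma is_RInt_0_infty_dominated (f g : R -> R) (lg : R) :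
  continuous_pos f -> continuous_pos g -> (forall t, 0 < t -> Rabs (f t) <= g t) ->
  is_RInt_0_infty g lg -> exists l, is_RInt_0_infty f l.
Proof.
  intros Hf Hg Hfg HG.
  apply (@filterlimi_locally_cauchy (R * R) R_CompleteSpace _ _).
  - refine (filter_imp _ _ _ (at_0_infty_inside 1 2 Rlt_0_1)).
    intros [a b] [Ha Hb]. simpl in *. split.
    + exists (RInt f a b). apply RInt_correct_pos; auto; lra.
    + intros y1 y2 H1 H2. now rewrite <- (is_RInt_unique _ _ _ _ H1), (is_RInt_unique _ _ _ _ H2).
  - intros [eps Heps].
    assert (He : 0 < eps / 4) by lra.
    pose proof (proj1 (filterlim_locally _ lg) (filterlim_RInt_0_infty g lg HG)
                  (mkposreal _ He)) as Hnear.
    destruct (filter_and _ _ Hnear (at_0_infty_inside 1 2 Rlt_0_1)) as [Qa Qb HQa HQb HQ].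
    exists (fun uv => Qa (fst uv) /\ Qb (snd uv)). split.
    + now apply (Filter_prod _ _ _ Qa Qb).
    + intros [a b] [a' b'] [Ha Hb] [Ha' Hb'] y y' Hy Hy'. simpl in *.
      rewrite <- (is_RInt_unique _ _ _ _ Hy), <- (is_RInt_unique _ _ _ _ Hy').
      destruct (HQ a b Ha Hb) as [G1 [Ha1 Hb1]], (HQ a' b Ha' Hb) as [G2 _],
        (HQ a' b' Ha' Hb') as [G3 [Ha3 Hb3]].
      simpl in *. apply ball_R_between in G1, G2, G3. simpl in G1, G2, G3.
      pose proof (RInt_increment_le_dominated f g a b a' b' Hf Hg Hfg) as H.
      assert (Rabs (RInt g a' b - RInt g a b) < eps / 2) by (apply Rabs_lt_between; lra).
      assert (Rabs (RInt g a' b' - RInt g a' b) < eps / 2) by (apply Rabs_lt_between; lra).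
      apply ball_R. specialize (H ltac:(lra) ltac:(lra) ltac:(lra) ltac:(lra)). lra.
Qed.

Definition exp_neg_half (t : R) : R := exp (- (t / 2)).

Lemma filterlim_infty_dominated_exp_neg_half (f : R -> R) (K : R) :
  (forall t, 0 < t -> Rabs (f t) <= K * exp_neg_half t) ->
  filterlim f (Rbar_locally p_infty) (locally 0).
Proof.
  intros Hf. apply filterlim_locally. intros [eps Heps]. simpl.
  set (K' := Rabs K + 1). assert (HK : 0 < K') by (unfold K'; pose proof (Rabs_pos K); lra).
  exists (Rmax 0 (-2 * ln (eps / K'))). intros t Ht.
  pose proof (Rmax_l 0 (-2 * ln (eps / K'))). pose proof (Rmax_r 0 (-2 * ln (eps / K'))).
  assert (Hd : exp_neg_half t < eps / K').
  { unfold exp_neg_half. rewrite <- (exp_ln (eps / K')) by (apply Rdiv_lt_0_compat; auto).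
    apply exp_increasing. lra. }
  apply ball_R. rewrite Rminus_0_r.
  apply Rle_lt_trans with (K' * exp_neg_half t).
  - apply Rle_trans with (K * exp_neg_half t); [apply Hf; lra |].
    apply Rmult_le_compat_r; [left; apply exp_pos | unfold K'; pose proof (Rle_abs K); lra].
  - apply (Rmult_lt_compat_l K') in Hd; auto.
    now replace (K' * (eps / K')) with eps in Hd by (field; lra).
Qed.

Lemma is_RInt_0_infty_exp_neg_half : is_RInt_0_infty exp_neg_half 2.
Proof.
  set (F := fun t => -2 * exp_neg_half t).
  assert (HF : forall t, is_derive F t (exp_neg_half t)).
  { intros t. unfold F, exp_neg_half. auto_derive; auto.
    apply Rminus_diag_uniq. unfold Rdiv. field. }
  apply (is_RInt_0_infty_ext (Derive F)); [intros t _; apply is_derive_unique, HF |].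
  replace 2 with (0 - F 0)
    by (unfold F, exp_neg_half, Rdiv; rewrite Rmult_0_l, Ropp_0, exp_0; ring).
  apply (is_RInt_gen_Derive F).
  - apply filter_forall. intros uv t _. eexists. apply HF.
  - apply filter_forall. intros uv t _. apply (continuous_ext exp_neg_half).
    + intros s. symmetry. apply is_derive_unique, HF.
    + apply ex_derive_continuous_R. unfold exp_neg_half. auto_derive; auto.
  - apply filterlim_at_right_continuous, ex_derive_continuous_R.
    unfold F, exp_neg_half. auto_derive; auto.
  - apply (filterlim_infty_dominated_exp_neg_half _ 2). intros t _. unfold F.
    rewrite Rabs_mult, Rabs_left, Rabs_right by (try left; try apply exp_pos; lra). lra.
Qed.

Lemma is_RInt_0_infty_of_exp_neg_half (f : R -> R) (K : R) : continuous_pos f ->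
  (forall t, 0 < t -> Rabs (f t) <= K * exp_neg_half t) ->
  is_RInt_0_infty f (RInt_gen f (at_right 0) (Rbar_locally p_infty)).
Proof.
  intros Hf Hdom.
  destruct (is_RInt_0_infty_dominated f (fun t => K * exp_neg_half t) (K * 2) Hf) as [l Hl]; auto.
  - intros t _. apply ex_derive_continuous_R.
    unfold exp_neg_half. auto_derive; auto.
  - apply is_RInt_0_infty_scal, is_RInt_0_infty_exp_neg_half.
  - now rewrite (is_RInt_0_infty_unique _ _ Hl).
Qed.

(** * The Basel problem, after Matsuoka *)

Definition wallis (k : nat) : R := RInt (fun x => cos x ^ (2 * k)) 0 (PI / 2).

Definition wallis_x2 (k : nat) : R := RInt (fun x => x ^ 2 * cos x ^ (2 * k)) 0 (PI / 2).

Definition basel_rem (k : nat) : R := 2 * wallis_x2 k / wallis k.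

Lemma ex_RInt_wallis (k : nat) : ex_RInt (fun x => cos x ^ (2 * k)) 0 (PI / 2).
Proof.
  apply ex_RInt_of_ex_derive. intros x. auto_derive; auto.
Qed.

Lemma ex_RInt_wallis_x2 (k : nat) : ex_RInt (fun x => x ^ 2 * cos x ^ (2 * k)) 0 (PI / 2).
Proof.
  apply ex_RInt_of_ex_derive. intros x. auto_derive; auto.
Qed.

Lemma cos_pow_double_S (k : nat) (x : R) : cos x ^ (2 * S k) = cos x ^ 2 * cos x ^ (2 * k).
Proof. rewrite <- pow_add. f_equal. lia. Qed.

Lemma eq_modulo_sin2_cos2 (x c l r : R) : l - r = c * (sin x ^ 2 + cos x ^ 2 - 1) -> l = r.
Proof.
  intros H. pose proof (sin2_cos2 x) as H1. unfold Rsqr in H1.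
  assert (E : sin x ^ 2 + cos x ^ 2 - 1 = 0) by (simpl; lra).
  rewrite E, Rmult_0_r in H. lra.
Qed.

(* Both recurrences integrate an exact derivative.  [ring] rejects the symbolic exponent
   [2 * k], whence the abstraction [C = cos x ^ m] with [m = 2 * k]. *)
Lemma wallis_S (k : nat) : wallis (S k) = (2 * INR k + 1) / (2 * INR k + 2) * wallis k.
Proof.
  assert (H : (2 * INR k + 2) * wallis (S k) + - (2 * INR k + 1) * wallis k = 0).
  { unfold wallis. rewrite <- RInt_lincomb by apply ex_RInt_wallis.
    rewrite (RInt_antiderivative (fun x => sin x * cos x ^ S (2 * k))).
    - rewrite cos_PI2, sin_0, pow_i by lia. ring.
    - intros x. rewrite cos_pow_double_S.
      pose proof (INR_double k) as Hm. remember (2 * k)%nat as m. auto_derive; auto.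
      change (match m with O => 1 | S _ => INR m + 1 end) with (INR (S m)).
      rewrite S_INR, Hm. set (C := cos x ^ m).
      apply (eq_modulo_sin2_cos2 x (- (2 * INR k + 1) * C)). ring.
    - intros x. apply ex_derive_continuous_R. auto_derive; auto. }
  pose proof (pos_INR k). field_simplify_eq; lra.
Qed.

Lemma wallis_x2_S (k : nat) :
  (INR k + 1) * (2 * INR k + 2) * wallis_x2 (S k)
  = (INR k + 1) * (2 * INR k + 1) * wallis_x2 k - wallis (S k).
Proof.
  assert (H : 1 * wallis (S k) + 1 * ((INR k + 1) * (2 * INR k + 2) * wallis_x2 (S k)
             + - ((INR k + 1) * (2 * INR k + 1)) * wallis_x2 k) = 0).
  { unfold wallis, wallis_x2.
    rewrite <- RInt_lincomb by (apply ex_RInt_wallis_x2).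
    rewrite <- RInt_lincomb; [| apply ex_RInt_wallis |].
    2: { apply ex_RInt_of_ex_derive. intros x. auto_derive; auto. }
    rewrite (RInt_antiderivative
               (fun x => x * cos x ^ S (S (2 * k))
                         + (INR k + 1) * x ^ 2 * (sin x * cos x ^ S (2 * k)))).
    - rewrite cos_PI2, sin_0, !pow_i by lia. ring.
    - intros x. rewrite !cos_pow_double_S.
      pose proof (INR_double k) as Hm. remember (2 * k)%nat as m. auto_derive; auto.
      change (match m with O => 1 | S _ => INR m + 1 end) with (INR (S m)).
      rewrite S_INR, Hm. set (C := cos x ^ m).
      apply (eq_modulo_sin2_cos2 x (- (INR k + 1) * (2 * INR k + 1) * x ^ 2 * C)). ring.
    - intros x. apply ex_derive_continuous_R. auto_derive; auto. }
  lra.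
Qed.

Lemma wallis_0 : wallis 0 = PI / 2.
Proof.
  unfold wallis. rewrite (RInt_antiderivative (fun x => x)).
  - ring.
  - intros x. auto_derive; auto.
  - intros x. apply continuous_const.
Qed.

Lemma wallis_x2_0 : wallis_x2 0 = PI ^ 3 / 24.
Proof.
  unfold wallis_x2. rewrite (RInt_antiderivative (fun x => x ^ 3 / 3)).
  - field.
  - intros x. auto_derive; auto. apply Rminus_diag_uniq. simpl. field.
  - intros x. apply ex_derive_continuous_R. auto_derive; auto.
Qed.

Lemma wallis_pos (k : nat) : 0 < wallis k.
Proof.
  induction k as [| k IHk].
  - rewrite wallis_0. pose proof PI_RGT_0. lra.
  - rewrite wallis_S. pose proof (pos_INR k).
    apply Rmult_lt_0_compat; auto. apply Rdiv_lt_0_compat; lra.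
Qed.

Lemma wallis_x2_ge_0 (k : nat) : 0 <= wallis_x2 k.
Proof.
  apply RInt_ge_0; [pose proof PI_RGT_0; lra | apply ex_RInt_wallis_x2 |].
  intros x _. apply Rmult_le_pos; [apply pow2_ge_0 |].
  rewrite pow_mult. apply pow_le, pow2_ge_0.
Qed.

Lemma sin_ge_third (x : R) : 0 <= x <= 2 -> x / 3 <= sin x.
Proof.
  intros Hx. apply Rle_trans with (sin_lb x); [| apply SIN; pose proof PI2_3_2; lra].
  unfold sin_lb, sin_approx, sin_term. simpl.
  assert (0 <= x * x <= 4) by nra.
  assert (0 <= x * (2 / 3 - x * x / 6)) by (apply Rmult_le_pos; lra).
  assert (0 <= (x * x * x * x * x) * (1 / 120 - x * x / 5040)).
  { apply Rmult_le_pos; [| lra]. assert (0 <= x * x * x * x) by nra. nra. }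
  lra.
Qed.

Lemma wallis_x2_le (k : nat) : wallis_x2 k <= 9 * (wallis k - wallis (S k)).
Proof.
  replace (9 * (wallis k - wallis (S k))) with (9 * wallis k + (- 9) * wallis (S k)) by ring.
  unfold wallis, wallis_x2. rewrite <- RInt_lincomb by apply ex_RInt_wallis.
  apply RInt_le; [pose proof PI_RGT_0; lra | apply ex_RInt_wallis_x2 | |].
  - apply ex_RInt_of_ex_derive. intros x. auto_derive; auto.
  - intros x Hx. rewrite cos_pow_double_S.
    assert (Hc : 0 <= cos x ^ (2 * k)) by (rewrite pow_mult; apply pow_le, pow2_ge_0).
    assert (Hs : x / 3 <= sin x) by (apply sin_ge_third; pose proof PI_4; lra).
    pose proof (sin2_cos2 x) as H1. unfold Rsqr in H1.
    assert (x ^ 2 <= 9 * (1 - cos x ^ 2)) by (simpl; nra).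
    replace (9 * cos x ^ (2 * k) + -9 * (cos x ^ 2 * cos x ^ (2 * k)))
      with (9 * (1 - cos x ^ 2) * cos x ^ (2 * k)) by ring.
    apply Rmult_le_compat_r; auto.
Qed.

Lemma basel_rem_0 : basel_rem 0 = PI ^ 2 / 6.
Proof. unfold basel_rem. rewrite wallis_0, wallis_x2_0. field. pose proof PI_RGT_0. lra. Qed.

Lemma basel_rem_S (k : nat) : basel_rem k - basel_rem (S k) = / (INR k + 1) ^ 2.
Proof.
  unfold basel_rem. pose proof (wallis_pos k). pose proof (pos_INR k).
  assert (HB : wallis_x2 (S k) = ((INR k + 1) * (2 * INR k + 1) * wallis_x2 k - wallis (S k))
                                 / ((INR k + 1) * (2 * INR k + 2))).
  { rewrite <- wallis_x2_S. field. lra. }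
  rewrite HB, wallis_S. field. lra.
Qed.

Lemma basel_rem_bounds (k : nat) : 0 <= basel_rem k <= 9 / (INR k + 1).
Proof.
  unfold basel_rem. pose proof (wallis_pos k). pose proof (wallis_x2_ge_0 k).
  pose proof (wallis_x2_le k). pose proof (pos_INR k). rewrite wallis_S in *.
  split.
  - apply Rmult_le_pos; [lra | left; apply Rinv_0_lt_compat; lra].
  - apply (Rmult_le_reg_r (wallis k)); [lra |].
    replace (2 * wallis_x2 k / wallis k * wallis k) with (2 * wallis_x2 k) by (field; lra).
    replace (9 / (INR k + 1) * wallis k)
      with (2 * (9 * (wallis k - (2 * INR k + 1) / (2 * INR k + 2) * wallis k))) by (field; lra).
    lra.
Qed.

Lemma basel_partial_sum (N : nat) :
  sum_lt (fun k => / (INR k + 1) ^ 2) N = PI ^ 2 / 6 - basel_rem N.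
Proof.
  induction N as [| N IHN]; cbn [sum_lt].
  - rewrite basel_rem_0. ring.
  - rewrite IHN, <- basel_rem_S. ring.
Qed.

(** * The Gamma function *)

Definition Gamma_integrand (x t : R) : R := Rpower t (x - 1) * exp (- t).

Definition Gamma_ln_integrand (x t : R) : R := Rpower t (x - 1) * ln t * exp (- t).

Definition Gamma_ln (x : R) : R :=
  RInt_gen (Gamma_ln_integrand x) (at_right 0) (Rbar_locally p_infty).

(* A common integrable majorant of [Gamma_integrand x], [Gamma_ln_integrand x] and of the
   Taylor remainder of [Gamma_integrand] at [x]: the powers [t ^ (x - 1 +- (x - 1) / 3)]
   absorb [ln t]. *)
Definition Gamma_envelope (x t : R) : R := (1 + Rpower t ((x - 1) / 3) ^ 2) ^ 3 * exp (- t).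

Lemma continuous_pos_Gamma_integrand (x : R) : continuous_pos (Gamma_integrand x).
Proof.
  intros t Ht. apply ex_derive_continuous_R.
  unfold Gamma_integrand, Rpower. auto_derive. auto.
Qed.

Lemma continuous_pos_Gamma_ln_integrand (x : R) : continuous_pos (Gamma_ln_integrand x).
Proof.
  intros t Ht. apply ex_derive_continuous_R.
  unfold Gamma_ln_integrand, Rpower. auto_derive. auto.
Qed.

Lemma Gamma_envelope_le_exp_neg_half (x : R) : 1 < x ->
  exists K, forall t, 0 < t -> Gamma_envelope x t <= K * exp_neg_half t.
Proof.
  intros Hx. destruct (Rpower_le_exp (2 * ((x - 1) / 3)) (1 / 6)) as [K0 [HK0 HP]]; try lra.
  exists ((1 + K0) ^ 3). intros t Ht. specialize (HP t Ht).
  assert (E : Rpower t ((x - 1) / 3) ^ 2 = Rpower t (2 * ((x - 1) / 3))).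
  { unfold Rpower. simpl. rewrite Rmult_1_r, <- exp_plus. f_equal. ring. }
  assert (1 <= exp (1 / 6 * t)) by (apply exp_ge_1; lra).
  assert (Hle : 0 <= 1 + Rpower t ((x - 1) / 3) ^ 2 <= (1 + K0) * exp (1 / 6 * t)).
  { rewrite E. pose proof (exp_pos (2 * ((x - 1) / 3) * ln t)). unfold Rpower in *. nra. }
  unfold Gamma_envelope, exp_neg_half.
  replace ((1 + K0) ^ 3 * exp (- (t / 2))) with (((1 + K0) * exp (1 / 6 * t)) ^ 3 * exp (- t)).
  - apply Rmult_le_compat_r; [left; apply exp_pos |]. apply pow_incr. lra.
  - rewrite Rpow_mult_distr, Rmult_assoc. f_equal. simpl.
    rewrite Rmult_1_r, <- !exp_plus. f_equal. field.
Qed.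

Section GammaIntegrandBounds.

Variables x t : R.
Hypothesis Hx : 1 < x.
Hypothesis Ht : 0 < t.

Let d := (x - 1) / 3.
Let p := Rpower t d.

Let d_pos : 0 < d.
Proof. unfold d. lra. Qed.

Let p_pos : 0 < p.
Proof. apply exp_pos. Qed.

Let Rpower_shift (h : R) : Rpower t (x + h - 1) = p ^ 3 * exp (h * ln t).
Proof.
  unfold p, Rpower. simpl. rewrite Rmult_1_r, <- !exp_plus. f_equal. unfold d. field.
Qed.

Let ln_bound : Rabs (ln t) <= (p + / p) / d.
Proof.
  unfold p, Rpower. rewrite <- exp_Ropp. apply abs_le_exp, d_pos.
Qed.

Let envelope_eq : Gamma_envelope x t = (1 + p ^ 2) ^ 3 * exp (- t).
Proof. reflexivity. Qed.

Lemma Gamma_integrand_le_envelope : Rabs (Gamma_integrand x t) <= Gamma_envelope x t.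
Proof.
  unfold Gamma_integrand. rewrite envelope_eq.
  replace x with (x + 0) at 1 by ring. rewrite Rpower_shift, Rmult_0_l, exp_0, Rmult_1_r.
  rewrite Rabs_right by (left; apply Rmult_lt_0_compat; [apply pow_lt |]; auto using exp_pos).
  apply Rmult_le_compat_r; [left; apply exp_pos |].
  apply pow_incr. split; [lra | nra].
Qed.

Lemma Gamma_ln_integrand_le_envelope : Rabs (Gamma_ln_integrand x t) <= / d * Gamma_envelope x t.
Proof.
  unfold Gamma_ln_integrand. rewrite envelope_eq.
  replace x with (x + 0) at 1 by ring. rewrite Rpower_shift, Rmult_0_l, exp_0, Rmult_1_r.
  pose proof (exp_pos (- t)).
  rewrite !Rabs_mult, (Rabs_right (exp (- t))), (Rabs_right (p ^ 3))
    by (left; try apply pow_lt; auto).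
  rewrite <- Rmult_assoc. apply Rmult_le_compat_r; [lra |].
  apply Rle_trans with (p ^ 3 * ((p + / p) / d)).
  - apply Rmult_le_compat_l; [left; apply pow_lt, p_pos | apply ln_bound].
  - replace (p ^ 3 * ((p + / p) / d)) with (/ d * (p ^ 4 + p ^ 2)) by (field; lra).
    apply Rmult_le_compat_l; [left; apply Rinv_0_lt_compat, d_pos |].
    assert (0 <= p ^ 2) by (apply pow_le; lra). assert (0 <= p ^ 4) by (apply pow_le; lra).
    assert (0 <= p ^ 6) by (apply pow_le; lra).
    replace ((1 + p ^ 2) ^ 3) with (1 + 3 * p ^ 2 + 3 * p ^ 4 + p ^ 6) by ring. lra.
Qed.

Lemma Gamma_integrand_taylor (h : R) : Rabs h <= d ->
  Rabs (Gamma_integrand (x + h) t - Gamma_integrand x t - h * Gamma_ln_integrand x t)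
  <= h ^ 2 / d ^ 2 * Gamma_envelope x t.
Proof.
  intros Hh. unfold Gamma_integrand, Gamma_ln_integrand. rewrite envelope_eq, Rpower_shift.
  replace x with (x + 0) at 1 2 by ring. rewrite Rpower_shift, Rmult_0_l, exp_0, Rmult_1_r.
  replace (p ^ 3 * exp (h * ln t) * exp (- t) - p ^ 3 * exp (- t) - h * (p ^ 3 * ln t * exp (- t)))
    with ((p ^ 3 * exp (- t)) * (exp (h * ln t) - 1 - h * ln t)) by ring.
  assert (Hpe : 0 < p ^ 3 * exp (- t))
    by (apply Rmult_lt_0_compat; [apply pow_lt |]; auto using exp_pos).
  rewrite Rabs_mult, (Rabs_right (p ^ 3 * exp (- t))) by lra.
  assert (Hip : 0 < / p) by (apply Rinv_0_lt_compat; auto).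
  assert (Hexp : exp (Rabs (h * ln t)) <= p + / p).
  { apply Rle_trans with (exp (Rabs (d * ln t))).
    - apply exp_le_increasing. rewrite !Rabs_mult, (Rabs_right d) by lra.
      apply Rmult_le_compat_r; [apply Rabs_pos | auto].
    - unfold p, Rpower. rewrite <- exp_Ropp. apply exp_abs_le. }
  assert (Hsq : (h * ln t) ^ 2 <= h ^ 2 * ((p + / p) / d) ^ 2).
  { rewrite Rpow_mult_distr. apply Rmult_le_compat_l; [apply pow2_ge_0 |].
    rewrite <- (pow2_abs (ln t)). apply pow_incr. split; [apply Rabs_pos | apply ln_bound]. }
  apply Rle_trans with (p ^ 3 * exp (- t) * (h ^ 2 * ((p + / p) / d) ^ 2 * (p + / p))).
  - apply Rmult_le_compat_l; [lra |].
    eapply Rle_trans; [apply exp_taylor_1 |].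
    apply Rmult_le_compat; auto using pow2_ge_0. left; apply exp_pos.
  - right. field. split; lra.
Qed.

End GammaIntegrandBounds.

Lemma is_RInt_0_infty_Gamma (x : R) : 1 < x -> is_RInt_0_infty (Gamma_integrand x) (Gamma x).
Proof.
  intros Hx. destruct (Gamma_envelope_le_exp_neg_half x Hx) as [K HK].
  apply (is_RInt_0_infty_of_exp_neg_half _ K (continuous_pos_Gamma_integrand x)).
  intros t Ht. eapply Rle_trans; [apply Gamma_integrand_le_envelope | apply HK]; auto.
Qed.

Lemma is_RInt_0_infty_Gamma_ln (x : R) : 1 < x ->
  is_RInt_0_infty (Gamma_ln_integrand x) (Gamma_ln x).
Proof.
  intros Hx. destruct (Gamma_envelope_le_exp_neg_half x Hx) as [K HK].
  apply (is_RInt_0_infty_of_exp_neg_half _ (/ ((x - 1) / 3) * K));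
    [apply continuous_pos_Gamma_ln_integrand |].
  intros t Ht. eapply Rle_trans; [apply Gamma_ln_integrand_le_envelope; auto |].
  rewrite Rmult_assoc. apply Rmult_le_compat_l; [left; apply Rinv_0_lt_compat; lra | auto].
Qed.

Lemma is_derive_Gamma (x : R) : 1 < x -> is_derive Gamma x (Gamma_ln x).
Proof.
  intros Hx. destruct (Gamma_envelope_le_exp_neg_half x Hx) as [K HK].
  set (d := (x - 1) / 3). assert (Hd : 0 < d) by (unfold d; lra).
  apply (is_derive_of_quadratic_bound _ _ _ d (K * 2 / d ^ 2) Hd). intros h Hh.
  assert (Hxh : 1 < x + h) by (apply Rabs_le_between in Hh; unfold d in Hh; lra).
  pose proof (is_RInt_0_infty_lin _ _ 1 (- h) _ _
    (is_RInt_0_infty_lin _ _ 1 (-1) _ _ (is_RInt_0_infty_Gamma (x + h) Hxh)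
       (is_RInt_0_infty_Gamma x Hx)) (is_RInt_0_infty_Gamma_ln x Hx)) as Hdiff.
  pose proof (is_RInt_0_infty_scal _ (h ^ 2 / d ^ 2 * K) _ is_RInt_0_infty_exp_neg_half) as Hdom.
  replace (Gamma (x + h) - Gamma x - h * Gamma_ln x)
    with (1 * (1 * Gamma (x + h) + -1 * Gamma x) + - h * Gamma_ln x) by ring.
  replace (K * 2 / d ^ 2 * h ^ 2) with (h ^ 2 / d ^ 2 * K * 2) by (field; lra).
  refine (is_RInt_0_infty_abs_le _ _ _ _ _ Hdiff Hdom).
  intros t Ht. cbv beta.
  replace (1 * (1 * Gamma_integrand (x + h) t + -1 * Gamma_integrand x t)
           + - h * Gamma_ln_integrand x t)
    with (Gamma_integrand (x + h) t - Gamma_integrand x t - h * Gamma_ln_integrand x t) by ring.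
  eapply Rle_trans; [apply Gamma_integrand_taylor; auto |].
  rewrite Rmult_assoc. apply Rmult_le_compat_l; [| auto].
  apply Rmult_le_pos; [apply pow2_ge_0 | left; apply Rinv_0_lt_compat, pow_lt; auto].
Qed.

Lemma filterlim_at_right_0_Rpower_exp (x : R) : 1 <= x ->
  filterlim (fun t => - (Rpower t x * exp (- t))) (at_right 0) (locally 0).
Proof.
  intros Hx. apply filterlim_locally. intros eps.
  assert (He : 0 < Rmin eps 1) by (apply Rmin_glb_lt; [apply cond_pos | lra]).
  refine (filter_imp _ _ _ (at_right_0_lt _ He)). intros a Ha.
  pose proof (Rmin_l eps 1). pose proof (Rmin_r eps 1).
  pose proof (Rpower_le_base a x ltac:(lra) Hx).
  assert (exp (- a) <= 1) by (rewrite <- exp_0; apply exp_le_increasing; lra).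
  pose proof (exp_pos (- a)). pose proof (exp_pos (x * ln a)). unfold Rpower in *.
  apply ball_R. rewrite Rminus_0_r, Rabs_Ropp, Rabs_right by nra. nra.
Qed.

(* Integration by parts, with the boundary term [- t ^ x * exp (- t)]. *)
Lemma Gamma_S (x : R) : 1 < x -> Gamma (x + 1) = x * Gamma x.
Proof.
  intros Hx.
  set (F := fun t => - (Rpower t x * exp (- t))).
  assert (HF : forall t, 0 < t ->
            is_derive F t (Gamma_integrand (x + 1) t - x * Gamma_integrand x t)).
  { intros t Ht. unfold F, Gamma_integrand, Rpower. auto_derive; auto.
    replace (x + 1 - 1) with x by ring. replace ((x - 1) * ln t) with (x * ln t + - ln t) by ring.
    rewrite exp_plus, (exp_Ropp (ln t)), exp_ln by auto.
    apply Rminus_diag_uniq. field. lra. }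
  assert (HD : forall t, 0 < t -> Derive F t = Gamma_integrand (x + 1) t - x * Gamma_integrand x t)
    by (intros; now apply is_derive_unique, HF).
  assert (Hint : is_RInt_0_infty (Derive F) (0 - 0)).
  { apply (is_RInt_gen_Derive F).
    - apply at_0_infty_pos. intros t Ht. eexists. now apply HF.
    - apply at_0_infty_pos. intros t Ht.
      apply (continuous_ext_loc _ (fun s => Gamma_integrand (x + 1) s - x * Gamma_integrand x s)).
      + apply (filter_imp (fun s => 0 < s)); [intros; symmetry; auto | now apply locally_gt].
      + apply ex_derive_continuous_R.
        unfold Gamma_integrand, Rpower. auto_derive. auto.
    - apply filterlim_at_right_0_Rpower_exp. lra.
    - destruct (Gamma_envelope_le_exp_neg_half (x + 1)) as [K HK]; [lra |].
      apply (filterlim_infty_dominated_exp_neg_half _ K). intros t Ht. unfold F. rewrite Rabs_Ropp.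
      eapply Rle_trans; [| apply HK; auto].
      replace x with (x + 1 - 1) at 1 by ring. apply Gamma_integrand_le_envelope; auto; lra. }
  apply (is_RInt_0_infty_ext _
           (fun t => 1 * Gamma_integrand (x + 1) t + (- x) * Gamma_integrand x t)) in Hint;
    [| intros t Ht; rewrite HD; auto; ring].
  pose proof (is_RInt_0_infty_lin _ _ 1 (- x) _ _ (is_RInt_0_infty_Gamma (x + 1) ltac:(lra))
                (is_RInt_0_infty_Gamma x Hx)) as Hlin.
  apply is_RInt_0_infty_unique in Hint. apply is_RInt_0_infty_unique in Hlin.
  rewrite Hint in Hlin. lra.
Qed.

Lemma Gamma_pos (x : R) : 1 < x -> 0 < Gamma x.
Proof.
  intros Hx.
  assert (Hf : forall t, 0 < t -> 0 <= Gamma_integrand x t)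
    by (intros t _; left; apply Rmult_lt_0_compat; apply exp_pos).
  apply Rlt_le_trans with (RInt (Gamma_integrand x) 1 2);
    [| apply RInt_le_is_RInt_0_infty;
       auto using continuous_pos_Gamma_integrand, is_RInt_0_infty_Gamma; lra].
  apply Rlt_le_trans with (RInt (fun _ => exp (-2)) 1 2).
  - rewrite RInt_const. pose proof (exp_pos (-2)). unfold scal; simpl; unfold mult; simpl. lra.
  - apply RInt_le; [lra | apply ex_RInt_const | |].
    { apply ex_RInt_pos; auto using continuous_pos_Gamma_integrand; lra. }
    intros t Ht. unfold Gamma_integrand. rewrite <- (Rmult_1_l (exp (-2))).
    apply Rmult_le_compat; [lra | left; apply exp_pos | | apply exp_le_increasing; lra].
    apply exp_ge_1. assert (0 <= ln t) by (rewrite <- ln_1; apply ln_le; lra). nra.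
Qed.

(* Cauchy-Schwarz: the integrand [(t ^ ((x-1)/2) - c t ^ ((y-1)/2)) ^ 2 exp (- t)] is
   nonnegative, and [c = Gamma m / Gamma y] is the optimal choice. *)
Lemma Gamma_midpoint_log_convex (x y : R) : 1 < x -> 1 < y ->
  Gamma ((x + y) / 2) ^ 2 <= Gamma x * Gamma y.
Proof.
  intros Hx Hy. set (m := (x + y) / 2). assert (Hm : 1 < m) by (unfold m; lra).
  pose proof (Gamma_pos y Hy).
  set (c := Gamma m / Gamma y).
  pose proof (is_RInt_0_infty_lin _ _ 1 (c ^ 2) _ _
    (is_RInt_0_infty_lin _ _ 1 (-2 * c) _ _
       (is_RInt_0_infty_Gamma x Hx) (is_RInt_0_infty_Gamma m Hm))
    (is_RInt_0_infty_Gamma y Hy)) as Hint.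
  apply is_RInt_0_infty_ge_0 in Hint.
  - replace (1 * (1 * Gamma x + -2 * c * Gamma m) + c ^ 2 * Gamma y)
      with (Gamma x - Gamma m ^ 2 / Gamma y) in Hint by (unfold c; field; lra).
    apply (Rmult_le_reg_r (/ Gamma y)); [apply Rinv_0_lt_compat; lra |].
    replace (Gamma x * Gamma y * / Gamma y) with (Gamma x) by (field; lra).
    fold m. unfold Rdiv in Hint. lra.
  - intros t Ht. unfold Gamma_integrand, Rpower.
    set (a := exp ((x - 1) / 2 * ln t)). set (b := exp ((y - 1) / 2 * ln t)).
    assert (Ea : exp ((x - 1) * ln t) = a ^ 2) by
      (unfold a; simpl; rewrite Rmult_1_r, <- exp_plus; f_equal; field).
    assert (Eb : exp ((y - 1) * ln t) = b ^ 2) by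
      (unfold b; simpl; rewrite Rmult_1_r, <- exp_plus; f_equal; field).
    assert (Em : exp ((m - 1) * ln t) = a * b) by
      (unfold a, b, m; rewrite <- exp_plus; f_equal; field).
    rewrite Ea, Eb, Em. pose proof (exp_pos (- t)).
    replace (1 * (1 * (a ^ 2 * exp (- t)) + -2 * c * (a * b * exp (- t)))
             + c ^ 2 * (b ^ 2 * exp (- t)))
      with ((a - c * b) ^ 2 * exp (- t)) by ring.
    apply Rmult_le_pos; [apply pow2_ge_0 | lra].
Qed.

(** * Differentiable midpoint-convex functions *)

Lemma midpoint_convex_seq_bounds (a : nat -> R) :
  (forall j, 2 * a (S j) <= a j + a (S (S j))) ->
  forall N, INR (S N) * (a 1%nat - a 0%nat) <= a (S N) - a 0%nat <= INR (S N) * (a (S N) - a N).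
Proof.
  intros Ha.
  assert (Hmono : forall j, a 1%nat - a 0%nat <= a (S j) - a j).
  { induction j as [| j IHj]; [lra |]. specialize (Ha j). lra. }
  induction N as [| N IHN]; [simpl; lra |].
  pose proof (pos_INR N). specialize (Hmono (S N)). specialize (Ha N).
  rewrite !S_INR in *. split; [lra |].
  assert ((INR N + 1) * (a (S N) - a N) <= (INR N + 1) * (a (S (S N)) - a (S N)))
    by (apply Rmult_le_compat_l; lra).
  lra.
Qed.

Lemma midpoint_convex_chord_bounds (g : R -> R) (a0 x y : R) (N : nat) :
  (forall u w, a0 < u -> a0 < w -> 2 * g ((u + w) / 2) <= g u + g w) -> a0 < x -> x < y ->
  let h := (y - x) / INR (S N) in
  (g (x + h) - g x) / h <= (g y - g x) / (y - x) <= (g (y - h) - g y) / (- h).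
Proof.
  intros Hmid Hx Hxy h. assert (HN : 0 < INR (S N)) by (apply lt_0_INR; lia).
  assert (Hh : 0 < h) by (apply Rdiv_lt_0_compat; lra).
  assert (Ey : x + INR (S N) * h = y) by (unfold h; field; lra).
  clearbody h.
  destruct (midpoint_convex_seq_bounds (fun j => g (x + INR j * h))) with N as [H1 H2].
  { intros j. rewrite !S_INR. pose proof (pos_INR j).
    replace (x + (INR j + 1) * h) with ((x + INR j * h + (x + (INR j + 1 + 1) * h)) / 2) by field.
    apply Hmid; nra. }
  cbv beta in H1, H2. rewrite Ey in H1, H2. change (INR 1) with 1 in H1.
  change (INR 0) with 0 in H1, H2. rewrite S_INR in *.
  replace (x + 1 * h) with (x + h) in H1 by ring.
  replace (x + 0 * h) with x in H1, H2 by ring.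
  replace (x + INR N * h) with (y - h) in H2 by lra.
  replace (y - x) with ((INR N + 1) * h) by lra.
  assert (Hp : 0 < / ((INR N + 1) * h)) by (apply Rinv_0_lt_compat; nra).
  replace ((g (x + h) - g x) / h) with ((INR N + 1) * (g (x + h) - g x) / ((INR N + 1) * h))
    by (field; lra).
  replace ((g (y - h) - g y) / - h) with ((INR N + 1) * (g y - g (y - h)) / ((INR N + 1) * h))
    by (field; lra).
  unfold Rdiv. split; apply Rmult_le_compat_r; lra.
Qed.

Lemma midpoint_convex_slope_bounds (g : R -> R) (a0 x y dx dy : R) :
  (forall u w, a0 < u -> a0 < w -> 2 * g ((u + w) / 2) <= g u + g w) -> a0 < x -> x < y ->
  is_derive g x dx -> is_derive g y dy -> dx <= (g y - g x) / (y - x) <= dy.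
Proof.
  intros Hmid Hx Hxy Dx Dy. split.
  - apply (is_derive_le_difference_quotients g x dx _ (y - x)); [lra | auto |].
    intros N. apply (midpoint_convex_chord_bounds g a0 x y N Hmid Hx Hxy).
  - cut (- dy <= - ((g y - g x) / (y - x))); [lra |].
    apply (is_derive_le_difference_quotients (fun z => - g z) y (- dy) _ (- (y - x)));
      [lra | exact (is_derive_opp g y dy Dy) |].
    intros N. destruct (midpoint_convex_chord_bounds g a0 x y N Hmid Hx Hxy) as [_ H].
    replace (y + - (y - x) / INR (S N)) with (y - (y - x) / INR (S N)) by (unfold Rdiv; ring).
    replace ((- g (y - (y - x) / INR (S N)) - - g y) / (- (y - x) / INR (S N)))
      with (- ((g (y - (y - x) / INR (S N)) - g y) / (- ((y - x) / INR (S N)))))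
      by (field; split; [apply not_0_INR; lia | lra]).
    lra.
Qed.

(** * Digamma and trigamma at integers *)

Lemma digamma_eq (x : R) : 1 < x -> digamma x = Gamma_ln x / Gamma x.
Proof. intros Hx. unfold digamma. now rewrite (is_derive_unique _ _ _ (is_derive_Gamma x Hx)). Qed.

Lemma Gamma_ln_S (x : R) : 1 < x -> Gamma_ln (x + 1) = Gamma x + x * Gamma_ln x.
Proof.
  intros Hx.
  assert (H1 : is_derive (fun y => Gamma (y + 1)) x (Gamma_ln (x + 1))).
  { apply (is_derive_eq _ _ _ _
             (is_derive_comp Gamma (fun y => y + 1) x _ _ (is_derive_Gamma (x + 1) ltac:(lra))
                ltac:(auto_derive; auto))).
    unfold scal; simpl; unfold mult; simpl. ring. }
  assert (H2 : is_derive (fun y => Gamma (y + 1)) x (Gamma x + x * Gamma_ln x)).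
  { apply (is_derive_ext_loc (fun y => y * Gamma y)).
    - apply (filter_imp (fun y => 1 < y)); [intros y Hy; symmetry; now apply Gamma_S |].
      now apply locally_gt.
    - apply (is_derive_eq _ _ _ _
               (is_derive_mult (fun y => y) Gamma x _ _ ltac:(auto_derive; auto)
                  (is_derive_Gamma x Hx) Rmult_comm)).
      unfold plus, mult; simpl. ring. }
  apply is_derive_unique in H1. apply is_derive_unique in H2. congruence.
Qed.

Lemma digamma_S (x : R) : 1 < x -> digamma (x + 1) = digamma x + / x.
Proof.
  intros Hx. pose proof (Gamma_pos x Hx).
  rewrite !digamma_eq, Gamma_ln_S, Gamma_S by lra. field. lra.
Qed.

Lemma is_derive_ln_Gamma (x : R) : 1 < x -> is_derive (fun y => ln (Gamma y)) x (digamma x).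
Proof.
  intros Hx. pose proof (Gamma_pos x Hx). rewrite digamma_eq by auto.
  apply (is_derive_eq _ _ _ _
           (is_derive_comp ln Gamma x _ _ ltac:(auto_derive; auto) (is_derive_Gamma x Hx))).
  unfold scal; simpl; unfold mult; simpl. field. lra.
Qed.

Lemma ln_Gamma_midpoint_convex (u w : R) : 1 < u -> 1 < w ->
  2 * ln (Gamma ((u + w) / 2)) <= ln (Gamma u) + ln (Gamma w).
Proof.
  intros Hu Hw. pose proof (Gamma_pos u Hu). pose proof (Gamma_pos w Hw).
  pose proof (Gamma_pos ((u + w) / 2) ltac:(lra)).
  rewrite <- ln_mult by auto.
  replace (2 * ln (Gamma ((u + w) / 2))) with (ln (Gamma ((u + w) / 2) ^ 2))
    by (simpl; rewrite Rmult_1_r, ln_mult by auto; ring).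
  apply ln_le; [apply pow_lt; auto | now apply Gamma_midpoint_log_convex].
Qed.

Lemma digamma_slope_bounds (x y : R) : 1 < x -> x < y ->
  digamma x <= (ln (Gamma y) - ln (Gamma x)) / (y - x) <= digamma y.
Proof.
  intros Hx Hxy. apply (midpoint_convex_slope_bounds (fun z => ln (Gamma z)) 1); auto.
  - apply ln_Gamma_midpoint_convex.
  - now apply is_derive_ln_Gamma.
  - apply is_derive_ln_Gamma. lra.
Qed.

Lemma digamma_le (x y : R) : 1 < x -> x <= y -> digamma x <= digamma y.
Proof.
  intros Hx [Hxy | <-]; [| lra]. pose proof (digamma_slope_bounds x y Hx Hxy). lra.
Qed.

(* The slope of [ln Gamma] over [r, r + 1] is [ln r]. *)
Lemma digamma_bounds (r : R) : 1 < r -> ln r - / r <= digamma r <= ln r.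
Proof.
  intros Hr. pose proof (digamma_slope_bounds r (r + 1) Hr ltac:(lra)) as H.
  pose proof (Gamma_pos r Hr).
  rewrite Gamma_S, ln_mult, digamma_S in H by lra.
  replace ((ln r + ln (Gamma r) - ln (Gamma r)) / (r + 1 - r)) with (ln r) in H by (field; lra).
  lra.
Qed.

Lemma digamma_shift (x : R) (N : nat) : 1 < x ->
  digamma (x + INR N) = digamma x + sum_lt (fun k => / (x + INR k)) N.
Proof.
  intros Hx. induction N as [| N IHN]; cbn [sum_lt].
  - simpl. rewrite Rplus_0_r. ring.
  - rewrite S_INR, <- Rplus_assoc, digamma_S, IHN by (pose proof (pos_INR N); lra). ring.
Qed.

(* [harmonic 0 = 1], because of [pred] in its definition. *)
Lemma harmonic_S (m : nat) : (1 <= m)%nat -> harmonic (S m) = harmonic m + / (INR m + 1).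
Proof.
  intros Hm. destruct m as [| m]; [lia |]. unfold harmonic. simpl pred. cbn [sum_f_R0].
  now rewrite <- S_INR.
Qed.

Lemma harmonic_sum_lt (m : nat) : (1 <= m)%nat -> harmonic m = sum_lt (fun k => / (INR k + 1)) m.
Proof.
  intros Hm. destruct m as [| m]; [lia |]. unfold harmonic. simpl pred.
  rewrite sum_lt_sum_f_R0. apply sum_eq. intros k _. now rewrite S_INR.
Qed.

Lemma digamma_nat (m : nat) : (1 <= m)%nat -> digamma (INR m + 1) = harmonic m + (digamma 2 - 1).
Proof.
  induction 1 as [| m Hm IH].
  - unfold harmonic. simpl. replace (1 + 1) with 2 by ring. field.
  - pose proof (lt_0_INR m ltac:(lia)).
    rewrite harmonic_S, S_INR, digamma_S, IH by (auto; lra). ring.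
Qed.

Lemma harmonic_sub_ln_bounds (m : nat) : (2 <= m)%nat ->
  0 <= harmonic m - ln (INR m) - (1 - digamma 2) <= / INR m.
Proof.
  intros Hm. destruct m as [| m]; [lia |].
  assert (H1 : 1 <= INR m) by (apply (le_INR 1); lia).
  pose proof (digamma_bounds (INR (S m))) as Hb. rewrite S_INR in *.
  rewrite digamma_nat, harmonic_S in * by lia. specialize (Hb ltac:(lra)). lra.
Qed.

Lemma euler_gamma_eq : euler_gamma = 1 - digamma 2.
Proof.
  assert (L : is_lim_seq (fun m => harmonic m - ln (INR m)) (1 - digamma 2)).
  { apply is_lim_seq_spec. intros eps.
    destruct (archimed_cor1 eps (cond_pos eps)) as [N [HN HN0]].
    exists (S (S N)). intros m Hm.
    pose proof (harmonic_sub_ln_bounds m ltac:(lia)).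
    assert (HNm : INR N <= INR m) by (apply le_INR; lia).
    assert (/ INR m <= / INR N) by (apply Rinv_le_contravar; auto; apply lt_0_INR; lia).
    apply Rabs_lt_between. lra. }
  unfold euler_gamma. now rewrite (is_lim_seq_unique _ _ L).
Qed.

Lemma digamma_nat_succ (m : nat) : (1 <= m)%nat -> digamma (INR m + 1) = harmonic m - euler_gamma.
Proof. intros Hm. rewrite euler_gamma_eq, digamma_nat by auto. ring. Qed.

Section TrigammaNat.

Variable m : nat.
Hypothesis Hm : (2 <= m)%nat.

Let c := INR m + 1.

Let c_ge_3 : 3 <= c.
Proof. unfold c. assert (2 <= INR m) by (apply (le_INR 2); auto). simpl in *. lra. Qed.

Let digamma_increment (h : R) (N : nat) : Rabs h <= 1 / 2 ->
  digamma (c + h) - digamma c = (digamma (c + h + INR N) - digamma (c + INR N))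
    + h * sum_lt (fun k => / ((c + INR k) * (c + h + INR k))) N.
Proof.
  intros Hh. pose proof c_ge_3. apply Rabs_le_between in Hh.
  rewrite !digamma_shift by lra.
  replace (h * sum_lt (fun k => / ((c + INR k) * (c + h + INR k))) N)
    with (sum_lt (fun k => / (c + INR k)) N - sum_lt (fun k => / (c + h + INR k)) N).
  - ring.
  - rewrite <- sum_lt_minus, <- sum_lt_scal. apply sum_lt_ext. intros k _. pose proof (pos_INR k).
    field. lra.
Qed.

Let digamma_far_increment (h : R) (N : nat) : Rabs h <= 1 / 2 ->
  Rabs (digamma (c + h + INR N) - digamma (c + INR N)) <= / (INR N + 1).
Proof.
  intros Hh. pose proof c_ge_3. apply Rabs_le_between in Hh. pose proof (pos_INR N).
  pose proof (digamma_le (c + INR N - 1) (c + h + INR N) ltac:(lra) ltac:(lra)).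
  pose proof (digamma_le (c + h + INR N) (c + INR N + 1) ltac:(lra) ltac:(lra)).
  pose proof (digamma_S (c + INR N - 1) ltac:(lra)) as E.
  replace (c + INR N - 1 + 1) with (c + INR N) in E by ring.
  rewrite digamma_S in * by lra.
  assert (/ (c + INR N) <= / (INR N + 1)) by (apply Rinv_le_contravar; lra).
  assert (/ (c + INR N - 1) <= / (INR N + 1)) by (apply Rinv_le_contravar; lra).
  apply Rabs_le_between. lra.
Qed.

Let sum_inv_sq_shift (N : nat) :
  sum_lt (fun k => / (c + INR k) ^ 2) N = basel_rem m - basel_rem (m + N).
Proof.
  rewrite (sum_lt_ext _ (fun k => / (INR (m + k) + 1) ^ 2))
    by (intros k _; unfold c; rewrite plus_INR; f_equal; ring).
  rewrite (sum_lt_shift (fun j => / (INR j + 1) ^ 2)), !basel_partial_sum. ring.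
Qed.

Let sum_inv_sq_le (N : nat) : sum_lt (fun k => / (c + INR k) ^ 2) N <= 3.
Proof.
  rewrite sum_inv_sq_shift. pose proof (basel_rem_bounds m). pose proof (basel_rem_bounds (m + N)).
  assert (9 / (INR m + 1) <= 3).
  { assert (2 <= INR m) by (apply (le_INR 2); auto). simpl in *.
    apply (Rmult_le_reg_r (INR m + 1)); [lra |]. field_simplify; lra. }
  lra.
Qed.

Let sum_prod_approx (h : R) (N : nat) : Rabs h <= 1 / 2 ->
  Rabs (sum_lt (fun k => / ((c + INR k) * (c + h + INR k))) N
        - sum_lt (fun k => / (c + INR k) ^ 2) N) <= 3 * Rabs h.
Proof.
  intros Hh. pose proof c_ge_3. apply Rabs_le_between in Hh.
  rewrite <- sum_lt_minus. eapply Rle_trans; [apply sum_lt_abs |].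
  apply Rle_trans with (sum_lt (fun k => Rabs h * / (c + INR k) ^ 2) N).
  - apply sum_lt_le. intros k _. pose proof (pos_INR k).
    replace (/ ((c + INR k) * (c + h + INR k)) - / (c + INR k) ^ 2)
      with (- h * (/ (c + INR k) ^ 2 * / (c + h + INR k))) by (field; lra).
    rewrite Rabs_mult, Rabs_Ropp. apply Rmult_le_compat_l; [apply Rabs_pos |].
    rewrite Rabs_right by (left; apply Rmult_lt_0_compat; apply Rinv_0_lt_compat; nra).
    rewrite <- (Rmult_1_r (/ (c + INR k) ^ 2)) at 2.
    apply Rmult_le_compat_l; [left; apply Rinv_0_lt_compat; nra |].
    rewrite <- Rinv_1. apply Rinv_le_contravar; lra.
  - rewrite sum_lt_scal, Rmult_comm.
    apply Rmult_le_compat_r; [apply Rabs_pos | apply sum_inv_sq_le].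
Qed.

Let digamma_increment_bound (h : R) (N : nat) : Rabs h <= 1 / 2 ->
  Rabs (digamma (c + h) - digamma c - h * basel_rem m) <= 3 * h ^ 2 + 10 / (INR N + 1).
Proof.
  intros Hh. rewrite (digamma_increment h N Hh).
  set (S1 := sum_lt (fun k => / ((c + INR k) * (c + h + INR k))) N).
  set (S2 := sum_lt (fun k => / (c + INR k) ^ 2) N).
  set (R := digamma (c + h + INR N) - digamma (c + INR N)).
  pose proof (digamma_far_increment h N Hh) as HR. fold R in HR.
  assert (HS : Rabs h * Rabs (S1 - S2) <= 3 * h ^ 2).
  { rewrite <- (pow2_abs h). replace (3 * Rabs h ^ 2) with (Rabs h * (3 * Rabs h)) by ring.
    apply Rmult_le_compat_l; [apply Rabs_pos | apply sum_prod_approx, Hh]. }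
  assert (Htail : Rabs h * basel_rem (m + N) <= 9 / (INR N + 1)).
  { pose proof (basel_rem_bounds (m + N)) as Hrem. rewrite plus_INR in Hrem.
    pose proof (pos_INR m). pose proof (pos_INR N).
    assert (9 / (INR m + INR N + 1) <= 9 / (INR N + 1))
      by (apply Rmult_le_compat_l; [lra | apply Rinv_le_contravar; lra]).
    assert (Rabs h <= 1) by lra.
    apply Rle_trans with (1 * basel_rem (m + N)); [apply Rmult_le_compat_r |]; lra. }
  replace (R + h * S1 - h * basel_rem m) with (R + h * (S1 - S2) - h * basel_rem (m + N))
    by (unfold S2; rewrite sum_inv_sq_shift; ring).
  pose proof (Rabs_triang (R + h * (S1 - S2)) (- (h * basel_rem (m + N)))).
  pose proof (Rabs_triang R (h * (S1 - S2))).
  pose proof (basel_rem_bounds (m + N)).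
  rewrite Rabs_Ropp, !Rabs_mult, (Rabs_right (basel_rem (m + N))) in * by lra.
  unfold Rdiv, Rminus in *. lra.
Qed.

Lemma is_derive_digamma_nat : is_derive digamma c (basel_rem m).
Proof.
  apply (is_derive_of_quadratic_bound _ _ _ (1 / 2) 3); [lra |]. intros h Hh.
  apply (le_of_le_add_inv_S _ _ 10). intros N.
  now apply digamma_increment_bound.
Qed.

End TrigammaNat.

Lemma trigamma_nat (m : nat) : (2 <= m)%nat ->
  trigamma (INR m + 1) = PI ^ 2 / 6 - sum_lt (fun j => / (INR j + 1) ^ 2) m.
Proof.
  intros Hm. rewrite basel_partial_sum.
  replace (PI ^ 2 / 6 - (PI ^ 2 / 6 - basel_rem m)) with (basel_rem m) by ring.
  apply is_derive_unique, is_derive_digamma_nat, Hm.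
Qed.

Lemma summand_partial_fractions (n k : nat) : (k < n)%nat ->
  (2 * INR k + 1) ^ 2 / ((INR n - INR k) ^ 2 * (INR n + INR k + 1) ^ 2)
  = (/ (INR (n - 1 - k) + 1) ^ 2 + / (INR (n + k) + 1) ^ 2)
    - 2 / (2 * INR n + 1) * (/ (INR (n - 1 - k) + 1) + / (INR (n + k) + 1)).
Proof.
  intros Hk. rewrite !minus_INR, plus_INR by lia. simpl (INR 1).
  assert (INR k + 1 <= INR n) by (rewrite <- S_INR; apply le_INR; lia).
  pose proof (pos_INR k). field. repeat split; lra.
Qed.

Theorem mainTheorem7 (n : nat) (hn : (1 <= n)%nat) :
  sum_f_R0 (fun k => (2 * INR k + 1) ^ 2 /
                     ((INR n - INR k) ^ 2 * (INR n + INR k + 1) ^ 2)) (n - 1)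
  = PI ^ 2 / 6 - 2 * euler_gamma / (2 * INR n + 1)
    - 2 / (2 * INR n + 1) * digamma (2 * INR n + 1)
    - trigamma (2 * INR n + 1).
Proof.
  rewrite <- (INR_double n), trigamma_nat, digamma_nat_succ, harmonic_sum_lt by lia.
  destruct n as [| n]; [lia |].
  replace (S n - 1)%nat with n by lia. rewrite <- sum_lt_sum_f_R0.
  rewrite (sum_lt_ext _ _ _ (summand_partial_fractions (S n))).
  rewrite sum_lt_minus, sum_lt_scal, (sum_lt_fold (fun j => / (INR j + 1) ^ 2)),
    (sum_lt_fold (fun j => / (INR j + 1))), INR_double.
  pose proof (pos_INR (S n)). field. lra.
Qed.
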